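(* Let $(G,M,\Delta)$ be a Garside structure and $(H,N,\delta)$ a parabolic substructure. Put $\omega=\delta^{-1}\Delta$ and $\Phi(\alpha)=\Delta\alpha\Delta^{-1}$. Let $c\in M$ be $N$-reduced, let $k\ge0$ be an integer, and let $d=\omega_1\omega_2\cdots\omega_k\,\Phi^{-k}(c)$, where $\omega_i=\Phi^{-i+1}(\omega)$ for $i\in\{1,\dots,k\}$. Then $d$ is $N$-reduced.
   Context: Let $G$ be a group and $M$ a submonoid with $M\cap M^{-1}=\{1\}$. Define $\alpha\le_L\beta$ iff $\alpha^{-1}\beta\in M$, and $\alpha\le_R\beta$ iff $\beta\alpha^{-1}\in M$. For $a\in M$ let $\mathrm{Div}_L(a)=\{b\in M: b\le_L a\}$, $\mathrm{Div}_R(a)=\{b\in M: b\le_R a\}$; $a$ is balanced if these coincide, and then $\mathrm{Div}(a)$ denotes this set. $M$ is Noetherian if each $a\in M$ admits an $n$ such that $a$ is not a product of more than $n$ non-trivial factors. A Garside structure $(G,M,\Delta)$: $\Delta\in M$ balanced, $M$ Noetherian, $\mathrm{Div}(\Delta)$ finite and generating $M$ as a monoid and $G$ as a group, $(G,\le_L)$ a lattice with meet $\wedge_L$. A parabolic substructure $(H,N,\delta)$: $\delta\in M$ balanced, $H$ (resp. $N$) the subgroup (resp. submonoid) generated by $\mathrm{Div}(\delta)$, and $\mathrm{Div}(\delta)=\mathrm{Div}(\Delta)\cap N$; it is assumed $H\neq\{1\}$. An element $a\in M$ is $N$-reduced if $a\wedge_L\delta=1$, equivalently if the only $b\in N$ with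 $b\le_L a$ is $b=1$. *)

From Stdlib Require Import List.
Import ListNotations.
Set Implicit Arguments.

Record Group := {
  carrier :> Type;
  gmul : carrier -> carrier -> carrier;
  gone : carrier;
  ginv : carrier -> carrier;
  gmulA : forall x y z, gmul x (gmul y z) = gmul (gmul x y) z;
  gmul1l : forall x, gmul gone x = x;
  gmul1r : forall x, gmul x gone = x;
  gmulVl : forall x, gmul (ginv x) x = gone;
  gmulVr : forall x, gmul x (ginv x) = gone
}.

Section Garside.
Variable G : Group.
Local Notation "x * y" := (gmul G x y).
Local Notation "1" := (gone G).
Local Notation "x ^-1" := (ginv G x) (at level 2, left associativity, format "x ^-1").

Definition pointed_submonoid (M : G -> Prop) : Prop :=
  M 1 /\ (forall x y, M x -> M y -> M (x * y)) /\
  (forall x, M x -> M (x^-1) -> x = 1).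

Definition leL (M : G -> Prop) (a b : G) : Prop := M (a^-1 * b).
Definition leR (M : G -> Prop) (a b : G) : Prop := M (b * a^-1).

Definition DivL (M : G -> Prop) (a : G) (b : G) : Prop := M b /\ leL M b a.
Definition DivR (M : G -> Prop) (a : G) (b : G) : Prop := M b /\ leR M b a.

Definition balanced (M : G -> Prop) (a : G) : Prop :=
  M a /\ forall b, DivL M a b <-> DivR M a b.

(* Div(a) for balanced a *)
Definition Div (M : G -> Prop) (a : G) : G -> Prop := DivL M a.

Definition gprod (l : list G) : G := fold_right (fun x acc => x * acc) 1 l.

Definition noetherian (M : G -> Prop) : Prop :=
  forall a, M a -> exists n : nat, forall l : list G,
    (forall x, In x l -> M x /\ x <> 1) -> gprod l = a -> length l <= n.

Inductive gen_monoid (S : G -> Prop) : G -> Prop :=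
| gm_one : gen_monoid S 1
| gm_gen : forall x, S x -> gen_monoid S x
| gm_mul : forall x y, gen_monoid S x -> gen_monoid S y -> gen_monoid S (x * y).

Inductive gen_group (S : G -> Prop) : G -> Prop :=
| gg_one : gen_group S 1
| gg_gen : forall x, S x -> gen_group S x
| gg_inv : forall x, gen_group S x -> gen_group S (x^-1)
| gg_mul : forall x y, gen_group S x -> gen_group S y -> gen_group S (x * y).

Definition finite_set (S : G -> Prop) : Prop :=
  exists l : list G, forall x, S x <-> In x l.

Definition is_glbL (M : G -> Prop) (x y m : G) : Prop :=
  leL M m x /\ leL M m y /\ forall z, leL M z x -> leL M z y -> leL M z m.
Definition is_lubL (M : G -> Prop) (x y j : G) : Prop :=
  leL M x j /\ leL M y j /\ forall z, leL M x z -> leL M y z -> leL M j z.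

Definition lattice_L (M : G -> Prop) : Prop :=
  forall x y, (exists m, is_glbL M x y m) /\ (exists j, is_lubL M x y j).

Definition garside_structure (M : G -> Prop) (Delta : G) : Prop :=
  pointed_submonoid M /\
  balanced M Delta /\
  noetherian M /\
  finite_set (Div M Delta) /\
  (forall x, M x <-> gen_monoid (Div M Delta) x) /\
  (forall x, gen_group (Div M Delta) x) /\
  lattice_L M.

(* parabolic substructure (H, N, delta), H = <Div delta>, N = <Div delta>_monoid *)
Definition parabolic_substructure (M : G -> Prop) (Delta delta : G) : Prop :=
  balanced M delta /\
  (forall b, Div M delta b <-> (Div M Delta b /\ gen_monoid (Div M delta) b)) /\
  (exists h, gen_group (Div M delta) h /\ h <> 1).

Definition N_reduced (M : G -> Prop) (delta a : G) : Prop :=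
  M a /\ is_glbL M a delta 1.

Definition Phi_inv (Delta : G) (a : G) : G := Delta^-1 * a * Delta.
Definition Phi_inv_iter (Delta : G) (n : nat) (a : G) : G := Nat.iter n (Phi_inv Delta) a.

(* omega_1 ... omega_k, with omega_i = Phi^{-(i-1)}(omega), omega = delta^{-1} Delta *)
Fixpoint omega_prod (Delta delta : G) (k : nat) : G :=
  match k with
  | O => 1
  | S k' => omega_prod Delta delta k' * Phi_inv_iter Delta k' (delta^-1 * Delta)
  end.

End Garside.

(* Conjugation by Delta is an automorphism of M, since the left and right
   divisors of the balanced element Delta generating M coincide.  Hence, if a
   is N-reduced, so is omega Phi^-1(a) = delta^-1 a Delta: a common divisor b of
   it and delta lies in Div(delta), so delta b Delta^-1 is a common divisor of a
   and delta, hence trivial, which makes delta b a divisor of Delta lying in N,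
   i.e. an element of Div(delta); thus b^-1 is in M and b = 1.  The theorem
   follows by induction on k, because
   omega_1 ... omega_(k+1) Phi^-(k+1)(c) = omega_1 ... omega_k Phi^-k(omega Phi^-1(c)). *)
From Stdlib Require Import PeanoNat.

Section GroupFacts.
Variable G : Group.
Local Notation "x * y" := (gmul G x y).
Local Notation "1" := (gone G).
Local Notation "x ^-1" := (ginv G x) (at level 2, left associativity, format "x ^-1").

Lemma mulKg (x y : G) : x^-1 * (x * y) = y.
Proof. rewrite gmulA, gmulVl; apply gmul1l. Qed.

Lemma mulKVg (x y : G) : x * (x^-1 * y) = y.
Proof. rewrite gmulA, gmulVr; apply gmul1l. Qed.

Lemma mul_eq1_invg (x y : G) : x * y = 1 -> x = y^-1.
Proof. intro Exy. rewrite <- (gmul1r G x), <- (gmulVr G y), gmulA, Exy. apply gmul1l. Qed.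

Lemma invgK (x : G) : x^-1^-1 = x.
Proof. symmetry; apply mul_eq1_invg, gmulVr. Qed.

Lemma invMg (x y : G) : (x * y)^-1 = y^-1 * x^-1.
Proof.
  symmetry; apply mul_eq1_invg.
  rewrite <- gmulA, mulKg. apply gmulVl.
Qed.

Lemma invg1 : 1^-1 = 1.
Proof. symmetry; apply mul_eq1_invg, gmul1l. Qed.

End GroupFacts.

Ltac gsimpl :=
  repeat progress rewrite ?invMg, ?invgK, ?invg1, ?gmul1l, ?gmul1r, <- ?gmulA,
    ?mulKg, ?mulKVg, ?gmulVl, ?gmulVr.

Ltac exact_group H :=
  lazymatch type of H with
  | ?P ?x => lazymatch goal with
             | |- P ?y => replace y with x by (gsimpl; reflexivity); exact H
             end
  end.

Section Garside.
Variable G : Group.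
Local Notation "x * y" := (gmul G x y).
Local Notation "1" := (gone G).
Local Notation "x ^-1" := (ginv G x) (at level 2, left associativity, format "x ^-1").

Definition Phi (Delta a : G) : G := Delta * a * Delta^-1.

Lemma PhiM (Delta x y : G) : Phi Delta (x * y) = Phi Delta x * Phi Delta y.
Proof. unfold Phi; gsimpl; reflexivity. Qed.

Lemma Phi_invM (Delta x y : G) :
  Phi_inv G Delta (x * y) = Phi_inv G Delta x * Phi_inv G Delta y.
Proof. unfold Phi_inv; gsimpl; reflexivity. Qed.

Lemma Phi_inv_iterM (Delta : G) (k : nat) (x y : G) :
  Phi_inv_iter G Delta k (x * y) = Phi_inv_iter G Delta k x * Phi_inv_iter G Delta k y.
Proof.
  induction k as [|k IHk]; [reflexivity|].
  unfold Phi_inv_iter in *; rewrite !Nat.iter_succ, IHk. apply Phi_invM.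
Qed.

Lemma omega_prodS_Phi_inv_iter (Delta delta : G) (k : nat) (c : G) :
  omega_prod G Delta delta (S k) * Phi_inv_iter G Delta (S k) c =
  omega_prod G Delta delta k * Phi_inv_iter G Delta k (delta^-1 * Delta * Phi_inv G Delta c).
Proof.
  cbn [omega_prod]. rewrite <- gmulA, (Phi_inv_iterM Delta k (delta^-1 * Delta)).
  f_equal. f_equal.
  unfold Phi_inv_iter; apply Nat.iter_succ_r.
Qed.

Variable M : G -> Prop.
Hypothesis M1 : M 1.
Hypothesis mulM : forall x y, M x -> M y -> M (x * y).
Hypothesis M_antisym : forall x, M x -> M x^-1 -> x = 1.
Hypothesis M_lattice : lattice_L G M.

Lemma gen_monoid_image (S : G -> Prop) (f : G -> G) :
  f 1 = 1 -> (forall x y, f (x * y) = f x * f y) -> (forall s, S s -> M (f s)) ->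
  forall x, gen_monoid G S x -> M (f x).
Proof.
  intros f1 fM fS x Sx.
  induction Sx as [| s Ss | x y _ IHx _ IHy].
  - rewrite f1; exact M1.
  - exact (fS s Ss).
  - rewrite fM; exact (mulM _ _ IHx IHy).
Qed.

Lemma N_reduced_intro (delta a : G) :
  M a -> M delta -> (forall b, M b -> leL G M b a -> leL G M b delta -> b = 1) ->
  N_reduced G M delta a.
Proof.
  intros Ma Mdelta divisor_eq1; split; [exact Ma|].
  destruct (M_lattice a delta) as [[m [m_le_a [m_le_delta m_glb]]] _].
  assert (Mm : M m).
  { assert (one_le_m : leL G M 1 m)
      by (apply m_glb; unfold leL; [exact_group Ma | exact_group Mdelta]).
    unfold leL in one_le_m; exact_group one_le_m. }
  assert (m = 1) as -> by auto.
  repeat split; assumption.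
Qed.

Variable Delta : G.
Hypothesis Delta_bal : balanced G M Delta.
Hypothesis M_gen : forall x, M x -> gen_monoid G (Div G M Delta) x.

Lemma Div_Phi_inv (s : G) : Div G M Delta s -> M (Phi_inv G Delta s).
Proof.
  intros [Ms s_le_Delta]; unfold leL in s_le_Delta.
  assert (co_le_Delta : DivR G M Delta (s^-1 * Delta)).
  { split; [exact s_le_Delta|]. unfold leR. exact_group Ms. }
  apply Delta_bal in co_le_Delta as [_ co_leL_Delta]; unfold leL in co_leL_Delta.
  unfold Phi_inv; exact_group co_leL_Delta.
Qed.

Lemma Div_Phi (s : G) : Div G M Delta s -> M (Phi Delta s).
Proof.
  intros s_Div; pose proof (proj1 (proj2 Delta_bal s) s_Div) as [Ms s_leR_Delta].
  unfold leR in s_leR_Delta.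
  assert (co_le_Delta : DivL G M Delta (Delta * s^-1)).
  { split; [exact s_leR_Delta|]. unfold leL. exact_group Ms. }
  apply Delta_bal in co_le_Delta as [_ co_leR_Delta]; unfold leR in co_leR_Delta.
  unfold Phi; exact_group co_leR_Delta.
Qed.

Lemma M_Phi_inv (x : G) : M x -> M (Phi_inv G Delta x).
Proof.
  intro Mx; apply (gen_monoid_image (Div G M Delta)); auto using Div_Phi_inv, Phi_invM.
  unfold Phi_inv; gsimpl; reflexivity.
Qed.

Lemma M_Phi (x : G) : M x -> M (Phi Delta x).
Proof.
  intro Mx; apply (gen_monoid_image (Div G M Delta)); auto using Div_Phi, PhiM.
  unfold Phi; gsimpl; reflexivity.
Qed.

Variable delta : G.
Hypothesis delta_bal : balanced G M delta.
Hypothesis Div_delta :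
  forall b, Div G M delta b <-> Div G M Delta b /\ gen_monoid G (Div G M delta) b.

Local Notation omega := (delta^-1 * Delta).

Lemma Div_delta_delta : Div G M delta delta.
Proof. split; [exact (proj1 delta_bal)|]. unfold leL; exact_group M1. Qed.

Lemma Div_delta_le_Delta (b : G) : Div G M delta b -> leL G M b Delta.
Proof.
  intro b_Div; destruct (proj1 (Div_delta b) b_Div) as [[_ b_le_Delta] _].
  exact b_le_Delta.
Qed.

Lemma M_omega : M omega.
Proof. exact (Div_delta_le_Delta _ Div_delta_delta). Qed.

Lemma common_divisor_omega_Phi_inv_eq1 (a b : G) :
  N_reduced G M delta a -> M b ->
  leL G M b (omega * Phi_inv G Delta a) -> leL G M b delta -> b = 1.
Proof.
  intros [_ [_ [_ a_delta_glb]]] Mb b_le_omega_a b_le_delta.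
  assert (b_Div_delta : Div G M delta b) by (split; assumption).
  pose proof (Div_delta_le_Delta _ b_Div_delta) as b_le_Delta.
  unfold leL in *.
  assert (delta_b_DeltaV_le_1 : leL G M (delta * b * Delta^-1) 1).
  { apply a_delta_glb; unfold leL.
    - pose proof (M_Phi _ b_le_omega_a) as Phi_b_le_omega_a.
      unfold Phi, Phi_inv in Phi_b_le_omega_a; exact_group Phi_b_le_omega_a.
    - pose proof (M_Phi _ b_le_Delta) as Phi_b_le_Delta.
      unfold Phi in Phi_b_le_Delta; exact_group Phi_b_le_Delta. }
  unfold leL in delta_b_DeltaV_le_1.
  assert (delta_b_Div_delta : Div G M delta (delta * b)).
  { apply Div_delta; split; [split|].
    - apply mulM; [exact (proj1 delta_bal) | exact Mb].
    - pose proof (M_Phi_inv _ delta_b_DeltaV_le_1) as delta_b_le_Delta.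
      unfold leL, Phi_inv in *; exact_group delta_b_le_Delta.
    - apply gm_mul; apply gm_gen; [exact Div_delta_delta | exact b_Div_delta]. }
  destruct delta_b_Div_delta as [_ delta_b_le_delta]; unfold leL in delta_b_le_delta.
  apply M_antisym; [exact Mb | exact_group delta_b_le_delta].
Qed.

Lemma N_reduced_omega_Phi_inv (a : G) :
  N_reduced G M delta a -> N_reduced G M delta (omega * Phi_inv G Delta a).
Proof.
  intro a_red; apply N_reduced_intro.
  - exact (mulM _ _ M_omega (M_Phi_inv _ (proj1 a_red))).
  - exact (proj1 delta_bal).
  - intros b; apply common_divisor_omega_Phi_inv_eq1, a_red.
Qed.

End Garside.

Theorem lemma3p7 (G : Group) (M : G -> Prop) (Delta delta c : G) (k : nat) :
  garside_structure G M Delta ->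
  parabolic_substructure G M Delta delta ->
  N_reduced G M delta c ->
  N_reduced G M delta
    (gmul G (omega_prod G Delta delta k) (Phi_inv_iter G Delta k c)).
Proof.
  intros ((M1 & mulM & M_antisym) & Delta_bal & _ & _ & M_gen & _ & M_lattice)
         (delta_bal & Div_delta & _).
  revert c; induction k as [|k IHk]; intros c c_red.
  - cbn; rewrite gmul1l; exact c_red.
  - rewrite omega_prodS_Phi_inv_iter; apply IHk.
    apply N_reduced_omega_Phi_inv; auto.
    intros x Mx; apply M_gen, Mx.
Qed.
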